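(* For any real numbers $t\ge1$ and $\varepsilon>0$, there exist an instance, a $t$-cohesive group $N^*$, and an allocation $A$ satisfying EJR-1 such that the average satisfaction of $N^*$ with respect to $A$ is at most $\frac{t-2+1/t}{2}+\varepsilon$.
   Context: Model: There is a set of agents $N=\{1,\dots,n\}$. The resource $R$ consists of a cake $C=[0,c]$ for a real $c\ge 0$ and a set of indivisible goods $G=\{g_1,\dots,g_m\}$ for an integer $m\ge 0$, with $\max(c,m)>0$. A piece of cake is a union of finitely many disjoint closed subintervals of $C$; its length $\ell(\cdot)$ is the sum of the lengths of its intervals. A bundle $R'=(C',G')$ consists of a piece of cake $C'\subseteq C$ and a set $G'\subseteq G$; its size is $s(R')=\ell(C')+|G'|$. Each agent $i$ approves a bundle $R_i=(C_i,G_i)$, and her utility for a bundle $R'$ is $u_i(R')=\ell(C_i\cap C')+|G_i\cap G'|$. A parameter $\alpha\in(0,c+m]$ is given; an allocation is a bundle $A$ with $s(A)\le\alpha$. For a real $t>0$, $N^*\subseteq N$ is $t$-cohesive if $|N^*|\ge t n/\alpha$ and $s(\bigcap_{i\in N^*}R_i)\ge t$. EJR-1: an allocation $A$ satisfies EJR-1 if for every real $t>0$ and every $t$-cohesive group $N^*$, some $j\in N^*$ has $u_j(A)>t-1$. The average satisfaction of a group $N'\subseteq N$ with respect to $A$ is $\frac1{|N'|}\sum_{i\in N'}u_i(A)$. *)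

From Stdlib Require Import Reals Lra Lia List.
Import ListNotations.
Open Scope R_scope.

(* A piece of cake: a finite list of closed intervals [a,b] (pairs (a,b)). *)
Definition piece := list (R * R).

Definition valid_piece (c : R) (P : piece) : Prop :=
  Forall (fun ab => 0 <= fst ab /\ fst ab <= snd ab /\ snd ab <= c) P /\
  ForallOrdPairs (fun ab cd => snd ab < fst cd \/ snd cd < fst ab) P.

Definition piece_len (P : piece) : R :=
  fold_right (fun ab s => (snd ab - fst ab) + s) 0 P.

Definition piece_inter (P Q : piece) : piece :=
  flat_map (fun ab =>
    flat_map (fun cd =>
      let lo := Rmax (fst ab) (fst cd) in
      let hi := Rmin (snd ab) (snd cd) in
      if Rle_dec lo hi then [(lo, hi)] else []) Q) P.

(* Goods are g_0, ..., g_{m-1}, represented by nat indices < m. *)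
Definition goods_inter (G H : list nat) : list nat :=
  filter (fun g => existsb (Nat.eqb g) H) G.

Record bundle := mkBundle { b_cake : piece; b_goods : list nat }.

Definition valid_bundle (c : R) (m : nat) (B : bundle) : Prop :=
  valid_piece c (b_cake B) /\ NoDup (b_goods B) /\
  (forall g, In g (b_goods B) -> (g < m)%nat).

Definition bundle_size (B : bundle) : R :=
  piece_len (b_cake B) + INR (length (b_goods B)).

Definition bundle_inter (B B' : bundle) : bundle :=
  mkBundle (piece_inter (b_cake B) (b_cake B'))
           (goods_inter (b_goods B) (b_goods B')).

(* An instance: n agents (indexed 0..n-1), cake [0,c], m goods,
   parameter alpha, and the approved bundle of each agent. *)
Record instance := mkInstance {
  n_agents : nat;
  cake_c : R;
  m_goods : nat;
  alpha : R;
  approved : nat -> bundle }.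

Definition valid_instance (I : instance) : Prop :=
  (1 <= n_agents I)%nat /\
  0 <= cake_c I /\
  0 < Rmax (cake_c I) (INR (m_goods I)) /\
  0 < alpha I /\ alpha I <= cake_c I + INR (m_goods I) /\
  (forall i, (i < n_agents I)%nat ->
     valid_bundle (cake_c I) (m_goods I) (approved I i)).

Definition full_bundle (I : instance) : bundle :=
  mkBundle [(0, cake_c I)] (seq 0 (m_goods I)).

Definition utility (I : instance) (i : nat) (A : bundle) : R :=
  bundle_size (bundle_inter (approved I i) A).

Definition allocation (I : instance) (A : bundle) : Prop :=
  valid_bundle (cake_c I) (m_goods I) A /\ bundle_size A <= alpha I.

Definition group (I : instance) (Ns : list nat) : Prop :=
  NoDup Ns /\ (forall i, In i Ns -> (i < n_agents I)%nat).

Definition group_inter (I : instance) (Ns : list nat) : bundle :=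
  fold_right (fun i B => bundle_inter (approved I i) B) (full_bundle I) Ns.

Definition cohesive (I : instance) (t : R) (Ns : list nat) : Prop :=
  group I Ns /\
  INR (length Ns) >= t * INR (n_agents I) / alpha I /\
  bundle_size (group_inter I Ns) >= t.

Definition EJR1 (I : instance) (A : bundle) : Prop :=
  forall (t : R) (Ns : list nat), 0 < t -> cohesive I t Ns ->
    exists j, In j Ns /\ utility I j A > t - 1.

Definition avg_satisfaction (I : instance) (Ns : list nat) (A : bundle) : R :=
  fold_right (fun i s => utility I i A + s) 0 Ns / INR (length Ns).

From Stdlib Require Import Reals List.
From Stdlib Require Import Lra Lia ZArith.
Import ListNotations.
Open Scope R_scope.

(* Fix integers 1 <= p <= s, a number of goods M and a small
   offset 0 < d <= 1.  The "staircase" instance has s agents, cake [0, s/p],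
   M goods and alpha = s/p; agent k approves all goods and the cake prefix
   [0, stair k] with stair k = max(0, k+1-p)/p + d.  The allocation is the
   cake prefix [0, stair (s-1)] and no goods, so agent k gets exactly stair k.
   - EJR-1 holds: a t'-cohesive group has at least t' p members, so (being a
     set of agent indices) it contains an agent j with j+1 >= t' p, whose
     utility is at least t' - 1 + d.
   - The set of all agents is t-cohesive as soon as t p <= s and t <= M: its
     common bundle already contains the M goods.
   - Its average satisfaction is (s-p)(s-p+1)/(2ps) + d, which for
     t p < s <= t p + 1 is at most (t-2+1/t)/2 + 1/p + d.
   Taking p > 2/eps and d <= eps/2 yields the theorem. *)

Lemma nat_ceiling (r : R) : 0 < r -> exists k : nat, r < INR k /\ INR k <= r + 1.
Proof.
  intros hr. destruct (archimed r) as [h1 h2].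
  exists (Z.to_nat (up r)).
  assert (0 <= up r)%Z by (apply le_IZR; lra).
  rewrite INR_IZR_INZ, Z2Nat.id by lia. lra.
Qed.

Lemma INR_sub_ge (a b : nat) : INR a - INR b <= INR (a - b).
Proof.
  destruct (le_lt_dec b a) as [h|h].
  - rewrite minus_INR by exact h. lra.
  - replace (a - b)%nat with 0%nat by lia. apply lt_INR in h. simpl. lra.
Qed.

Lemma div_nonneg (x y : R) : 0 <= x -> 0 < y -> 0 <= x / y.
Proof.
  intros hx hy. unfold Rdiv. apply Rmult_le_pos; [exact hx|].
  left. apply Rinv_0_lt_compat, hy.
Qed.

Lemma NoDup_has_large (l : list nat) :
  NoDup l -> l <> [] -> exists j, In j l /\ (length l <= S j)%nat.
Proof.
  intros hnd hne.
  destruct (Exists_dec (fun j => length l <= S j)%nat l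
              (fun j => le_dec (length l) (S j))) as [hex|hnone].
  - apply Exists_exists in hex. exact hex.
  - exfalso.
    assert (hincl : incl l (seq 0 (length l - 1))).
    { intros x hx. apply in_seq. split; [lia|].
      destruct (le_lt_dec (length l) (S x)) as [h|h]; [|lia].
      exfalso. apply hnone, Exists_exists. eauto. }
    pose proof (NoDup_incl_length hnd hincl) as hlen.
    rewrite length_seq in hlen. destruct l; [congruence|simpl in hlen; lia].
Qed.

Definition sum_list (f : nat -> R) (l : list nat) : R :=
  fold_right (fun i acc => f i + acc) 0 l.

Lemma sum_list_ext_in (f g : nat -> R) (l : list nat) :
  (forall i, In i l -> f i = g i) -> sum_list f l = sum_list g l.
Proof.
  induction l as [|a l IH]; intros h; simpl; auto.
  rewrite h by (simpl; auto). rewrite IH; auto. intros i hi; apply h; simpl; auto.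
Qed.

Lemma sum_list_affine (f : nat -> R) (q d : R) (l : list nat) : q <> 0 ->
  sum_list (fun i => f i / q + d) l = sum_list f l / q + INR (length l) * d.
Proof.
  intros hq. induction l as [|a l IH]; cbn [sum_list fold_right length].
  - simpl. field. auto.
  - unfold sum_list in IH. rewrite IH, S_INR. field. auto.
Qed.

Lemma sum_list_staircase (p n : nat) :
  2 * sum_list (fun k => INR (k + 1 - p)) (seq 0 n) = INR (n - p) * INR (n - p + 1).
Proof.
  induction n as [|n IH]; [simpl; lra|].
  unfold sum_list in *. rewrite seq_S, fold_right_app. cbn [fold_right].
  assert (hshift : forall l z, fold_right (fun k acc => INR (k + 1 - p) + acc) z l
                     = fold_right (fun k acc => INR (k + 1 - p) + acc) 0 l + z).
  { induction l as [|a l IHl]; intros z; simpl; [lra|]. rewrite IHl. lra. }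
  rewrite hshift, Nat.add_0_l.
  destruct (le_lt_dec p n) as [h|h].
  - replace (S n - p)%nat with (S (n - p)) by lia.
    replace (n + 1 - p)%nat with (S (n - p)) in * by lia.
    replace (S (n - p) + 1)%nat with (S (S (n - p))) by lia.
    replace (n - p + 1)%nat with (S (n - p)) in IH by lia.
    rewrite !S_INR in *. nra.
  - replace (S n - p)%nat with 0%nat by lia.
    replace (n + 1 - p)%nat with 0%nat by lia.
    replace (n - p)%nat with 0%nat in IH by lia. simpl in *. lra.
Qed.

Lemma piece_inter_wf (P Q : piece) : Forall (fun ab => fst ab <= snd ab) (piece_inter P Q).
Proof.
  apply Forall_forall. intros x hx. unfold piece_inter in hx.
  apply in_flat_map in hx as [ab [_ hx]].
  apply in_flat_map in hx as [cd [_ hx]].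
  destruct (Rle_dec _ _) as [h|h]; simpl in hx; [|contradiction].
  destruct hx as [<-|[]]. exact h.
Qed.

Lemma piece_len_nonneg (P : piece) : Forall (fun ab => fst ab <= snd ab) P -> 0 <= piece_len P.
Proof.
  induction P as [|a P IH]; intros h; simpl; [lra|].
  inversion h as [|? ? hab hP]; subst. specialize (IH hP). lra.
Qed.

Lemma goods_inter_incl (G H : list nat) : incl G H -> goods_inter G H = G.
Proof.
  induction G as [|a G IH]; intros hi; simpl; auto.
  assert (existsb (Nat.eqb a) H = true) as ->.
  { apply existsb_exists. exists a. split; [apply hi; simpl; auto|apply Nat.eqb_refl]. }
  f_equal. apply IH. intros g hg. apply hi; simpl; auto.
Qed.

Lemma group_inter_size_ge_goods (I : instance) (Ns : list nat) :
  0 <= cake_c I ->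
  (forall i, In i Ns -> b_goods (approved I i) = seq 0 (m_goods I)) ->
  INR (m_goods I) <= bundle_size (group_inter I Ns).
Proof.
  intros hc hall.
  assert (hgoods : b_goods (group_inter I Ns) = seq 0 (m_goods I)).
  { induction Ns as [|i Ns IH]; simpl; auto.
    rewrite IH by (intros j hj; apply hall; simpl; auto).
    rewrite hall by (simpl; auto). apply goods_inter_incl, incl_refl. }
  assert (hcake : 0 <= piece_len (b_cake (group_inter I Ns))).
  { destruct Ns as [|i Ns]; simpl; [lra|]. apply piece_len_nonneg, piece_inter_wf. }
  unfold bundle_size. rewrite hgoods, length_seq. lra.
Qed.

Lemma utility_prefix (b a : R) (G : list nat) : 0 <= b -> b <= a ->
  bundle_size (bundle_inter (mkBundle [(0, b)] G) (mkBundle [(0, a)] [])) = b.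
Proof.
  intros h0 h1. unfold bundle_size, bundle_inter, piece_inter. cbn [b_cake b_goods].
  assert (hnil : goods_inter G [] = []) by (induction G; simpl; auto).
  rewrite hnil. simpl.
  rewrite (Rmax_left 0 0), Rmin_left by lra.
  destruct (Rle_dec 0 b); [simpl; lra|lra].
Qed.

Lemma valid_prefix (c x : R) : 0 <= x -> x <= c -> valid_piece c [(0, x)].
Proof.
  intros h0 h1. split.
  - constructor; [simpl; lra|constructor].
  - constructor; constructor.
Qed.

Section Staircase.

Variables (p s M : nat) (d : R).
Hypothesis (hp : (1 <= p)%nat) (hps : (p <= s)%nat) (hd0 : 0 < d) (hd1 : d <= 1).

Definition stair (k : nat) : R := INR (k + 1 - p) / INR p + d.

Definition staircase : instance :=
  mkInstance s (INR s / INR p) M (INR s / INR p)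
             (fun k => mkBundle [(0, stair k)] (seq 0 M)).

Definition top_alloc : bundle := mkBundle [(0, stair (s - 1))] [].

Lemma INR_p_pos : 0 < INR p.
Proof. apply lt_0_INR. lia. Qed.

Lemma stair_bounds (k : nat) : (k < s)%nat -> 0 <= stair k <= stair (s - 1).
Proof.
  intros hk. pose proof INR_p_pos. unfold stair. split.
  - pose proof (pos_INR (k + 1 - p)).
    assert (0 <= INR (k + 1 - p) / INR p) by (apply div_nonneg; lra). lra.
  - apply Rplus_le_compat_r, Rmult_le_compat_r.
    + left. apply Rinv_0_lt_compat. lra.
    + apply le_INR. lia.
Qed.

(* The allocated prefix fits in the cake (this is where d <= 1 is used). *)
Lemma stair_top_le_cake : stair (s - 1) <= INR s / INR p.
Proof.
  pose proof INR_p_pos. unfold stair.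
  replace (s - 1 + 1 - p)%nat with (s - p)%nat by lia.
  rewrite minus_INR by exact hps.
  replace ((INR s - INR p) / INR p) with (INR s / INR p - 1) by (field; lra). lra.
Qed.

Lemma stair_ge (k : nat) : (INR k + 1) / INR p - 1 + d <= stair k.
Proof.
  pose proof INR_p_pos. unfold stair.
  pose proof (INR_sub_ge (k + 1) p) as hsub. rewrite plus_INR in hsub. simpl in hsub.
  replace ((INR k + 1) / INR p - 1) with ((INR k + 1 - INR p) / INR p) by (field; lra).
  apply Rplus_le_compat_r, Rmult_le_compat_r; [left; apply Rinv_0_lt_compat|]; lra.
Qed.

Lemma staircase_valid : valid_instance staircase.
Proof.
  pose proof INR_p_pos.
  assert (hc : 0 < INR s / INR p) by (apply Rdiv_lt_0_compat; [apply lt_0_INR; lia|lra]).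
  pose proof (pos_INR M).
  unfold valid_instance; simpl.
  split; [lia|]. split; [lra|]. split.
  { apply Rlt_le_trans with (INR s / INR p); [lra|apply Rmax_l]. }
  split; [lra|]. split; [lra|].
  intros i hi. pose proof (stair_bounds i hi). pose proof stair_top_le_cake.
  split; [apply valid_prefix; lra|split].
  - apply seq_NoDup.
  - intros g hg. apply in_seq in hg. lia.
Qed.

Lemma top_alloc_allocation : allocation staircase top_alloc.
Proof.
  assert (hs : (s - 1 < s)%nat) by lia.
  pose proof (stair_bounds _ hs). pose proof stair_top_le_cake.
  split.
  - split; [apply valid_prefix; simpl; lra|split; [constructor|intros g []]].
  - unfold bundle_size. simpl. lra.
Qed.

(* Every agent's approved prefix lies inside the allocated one. *)
Lemma utility_top (k : nat) : (k < s)%nat -> utility staircase k top_alloc = stair k.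
Proof. intros hk. apply utility_prefix; apply stair_bounds; exact hk. Qed.

Lemma staircase_quota (t : R) :
  t * INR (n_agents staircase) / alpha staircase = t * INR p.
Proof.
  assert (hp0 : INR p <> 0) by (apply not_0_INR; lia).
  assert (hs0 : INR s <> 0) by (apply not_0_INR; lia).
  simpl. field. auto.
Qed.

(* EJR-1 via the pigeonhole principle: a large group contains an agent
   with a large index, hence a high stair. *)
Lemma top_alloc_EJR1 : EJR1 staircase top_alloc.
Proof.
  pose proof INR_p_pos.
  intros t' Ns ht' [[hnd hlt] [hlen _]]. simpl in hlt.
  rewrite staircase_quota in hlen.
  assert (hne : Ns <> []).
  { intros ->. simpl in hlen. assert (0 < t' * INR p) by (apply Rmult_lt_0_compat; lra). lra. }
  destruct (NoDup_has_large Ns hnd hne) as [j [hj hjl]].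
  exists j. split; [exact hj|].
  rewrite utility_top by (apply hlt; exact hj).
  apply le_INR in hjl. rewrite S_INR in hjl.
  assert (t' <= (INR j + 1) / INR p).
  { apply Rmult_le_reg_r with (INR p); [lra|].
    replace ((INR j + 1) / INR p * INR p) with (INR j + 1) by (field; lra). lra. }
  pose proof (stair_ge j). lra.
Qed.

(* The group of all agents is t-cohesive thanks to the M common goods. *)
Lemma all_agents_cohesive (t : R) :
  t * INR p <= INR s -> t <= INR M -> cohesive staircase t (seq 0 s).
Proof.
  intros hts htM. split; [|split].
  - split; [apply seq_NoDup|]. intros i hi. apply in_seq in hi. simpl. lia.
  - rewrite length_seq, staircase_quota. lra.
  - apply Rle_ge, Rle_trans with (INR M); [exact htM|].
    apply (group_inter_size_ge_goods staircase); simpl.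
    + apply div_nonneg; [apply pos_INR|apply INR_p_pos].
    + reflexivity.
Qed.

Lemma avg_all_agents :
  avg_satisfaction staircase (seq 0 s) top_alloc
  = (INR s - INR p) * (INR s - INR p + 1) / (2 * INR p * INR s) + d.
Proof.
  pose proof INR_p_pos.
  assert (hs : 0 < INR s) by (apply lt_0_INR; lia).
  unfold avg_satisfaction.
  change (fold_right _ 0 (seq 0 s))
    with (sum_list (fun i => utility staircase i top_alloc) (seq 0 s)).
  rewrite (sum_list_ext_in _ (fun k => INR (k + 1 - p) / INR p + d)).
  2:{ intros i hi. apply in_seq in hi. apply utility_top. lia. }
  rewrite sum_list_affine, length_seq by lra.
  pose proof (sum_list_staircase p s) as hsum.
  rewrite plus_INR, minus_INR in hsum by exact hps. simpl in hsum.
  replace (sum_list (fun k => INR (k + 1 - p)) (seq 0 s))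
    with ((INR s - INR p) * (INR s - INR p + 1) / 2) by lra.
  field. lra.
Qed.

End Staircase.

Lemma staircase_average_bound (s p t : R) : 1 <= t -> 1 <= p -> t * p < s -> s <= t * p + 1 ->
  (s - p) * (s - p + 1) / (2 * p * s) <= (t - 2 + 1 / t) / 2 + 1 / p.
Proof.
  intros ht hp h1 h2.
  assert (hs : 0 < s) by nra.
  assert (key : t * ((s - p) * (s - p + 1)) <= p * s * t * (t - 2) + p * s + 2 * s * t).
  { assert (h3 : 0 <= (1 - (s - p * t)) * (s * t - p)) by (apply Rmult_le_pos; nra).
    nra. }
  assert (hpst : 0 < p * s * t) by (apply Rmult_lt_0_compat; [apply Rmult_lt_0_compat|]; lra).
  apply Rmult_le_reg_r with (2 * p * s * t); [lra|].
  replace ((s - p) * (s - p + 1) / (2 * p * s) * (2 * p * s * t))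
    with (t * ((s - p) * (s - p + 1))) by (field; lra).
  replace (((t - 2 + 1 / t) / 2 + 1 / p) * (2 * p * s * t))
    with (p * s * t * (t - 2) + p * s + 2 * s * t) by (field; lra).
  exact key.
Qed.

Theorem mainTheorem17 (t eps : R) (ht : 1 <= t) (heps : 0 < eps) :
  exists (I : instance) (Ns : list nat) (A : bundle),
    valid_instance I /\ cohesive I t Ns /\ allocation I A /\ EJR1 I A /\
    avg_satisfaction I Ns A <= (t - 2 + 1 / t) / 2 + eps.
Proof.
  destruct (nat_ceiling (2 / eps)) as [p [hp _]]; [apply Rdiv_lt_0_compat; lra|].
  assert (hp0 : 0 < INR p) by (pose proof (Rdiv_lt_0_compat 2 eps); lra).
  assert (hp1 : (1 <= p)%nat) by (destruct p; [simpl in hp0; lra|lia]).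
  assert (hpe : 1 / INR p <= eps / 2).
  { apply Rmult_le_reg_r with (INR p * 2 / eps); [apply Rdiv_lt_0_compat; lra|].
    replace (1 / INR p * (INR p * 2 / eps)) with (2 / eps) by (field; lra).
    replace (eps / 2 * (INR p * 2 / eps)) with (INR p) by (field; lra). lra. }
  destruct (nat_ceiling (t * INR p)) as [s [hs1 hs2]]; [nra|].
  destruct (nat_ceiling t) as [M [hM _]]; [lra|].
  assert (hps : (p <= s)%nat) by (apply INR_le; nra).
  set (d := Rmin 1 (eps / 2)).
  assert (hd0 : 0 < d) by (apply Rmin_glb_lt; lra).
  assert (hd1 : d <= 1) by apply Rmin_l.
  assert (hd2 : d <= eps / 2) by apply Rmin_r.
  exists (staircase p s M d), (seq 0 s), (top_alloc p s d).
  split; [|split; [|split; [|split]]].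
  - apply staircase_valid; assumption.
  - apply all_agents_cohesive; lra || lia.
  - apply top_alloc_allocation; assumption.
  - apply top_alloc_EJR1; assumption.
  - rewrite avg_all_agents by assumption.
    pose proof (staircase_average_bound (INR s) (INR p) t ht
                  ltac:(apply (le_INR 1); exact hp1) hs1 hs2). lra.
Qed.
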